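(* Let $D\subset\mathbb{R}^3$ be a domain such that for every isometry $A$ of $\mathbb{R}^3$ the semitube domain $S_{A(D)}\subset\mathbb{C}^2$ is pseudoconvex. Then $D$ is convex.
   Context: Identify $\mathbb{R}^3$ with $\mathbb{C}\times\mathbb{R}$. For a set $B\subset\mathbb{R}^3$, the semitube set with base $B$ is $S_B:=\{(z_1,z_2)\in\mathbb{C}^2:(z_1,\operatorname{Re} z_2)\in B\}$, i.e. $S_B=B\times\mathbb{R}$ (the last factor being $\operatorname{Im} z_2$). When $B$ is a domain, $S_B$ is called a semitube domain. *)

From HB Require Import structures.
From mathcomp Require Import all_boot all_order all_algebra.
From mathcomp Require Import all_classical all_reals all_analysis.
Set Implicit Arguments. Unset Strict Implicit. Unset Printing Implicit Defensive.
Import Order.TTheory GRing.Theory Num.Theory.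
Import numFieldNormedType.Exports.
Local Open Scope classical_set_scope.
Local Open Scope ring_scope.

Section Defs.
Variable R : realType.

(* R^3 = C x R : a point p = ((Re z1, Im z1), Re z2) *)
Definition R3 := ((R * R) * R)%type.
(* C^2 : a point z = ((Re z1, Im z1), (Re z2, Im z2)) *)
Definition C2 := ((R * R) * (R * R))%type.

Definition dist3 (p q : R3) : R :=
  Num.sqrt ((p.1.1 - q.1.1) ^+ 2 + (p.1.2 - q.1.2) ^+ 2 + (p.2 - q.2) ^+ 2).

Definition dist4 (z w : C2) : R :=
  Num.sqrt ((z.1.1 - w.1.1) ^+ 2 + (z.1.2 - w.1.2) ^+ 2
          + (z.2.1 - w.2.1) ^+ 2 + (z.2.2 - w.2.2) ^+ 2).

Definition isometry3 (A : R3 -> R3) : Prop :=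
  forall p q, dist3 (A p) (A q) = dist3 p q.

Definition domain3 (D : set R3) : Prop := D !=set0 /\ open D /\ connected D.

Definition semitube (B : set R3) : set C2 :=
  [set z | B ((z.1.1, z.1.2), z.2.1)].

Definition convex3 (D : set R3) : Prop :=
  forall p q, D p -> D q -> forall t : R, 0 <= t <= 1 ->
    D (((1 - t) * p.1.1 + t * q.1.1, (1 - t) * p.1.2 + t * q.1.2),
        (1 - t) * p.2 + t * q.2).

(* complex multiplication by e^{it} on C, in real coordinates *)
Definition rotC (t : R) (w : R * R) : R * R :=
  (cos t * w.1 - sin t * w.2, sin t * w.1 + cos t * w.2).

(* the point a + e^{it} b of C^2 *)
Definition circ (a b : C2) (t : R) : C2 :=
  ((a.1.1 + (rotC t b.1).1, a.1.2 + (rotC t b.1).2),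
   (a.2.1 + (rotC t b.2).1, a.2.2 + (rotC t b.2).2)).

(* the point a + zeta b of C^2, zeta = (x, y) = x + i y *)
Definition cline (a b : C2) (zeta : R * R) : C2 :=
  ((a.1.1 + (zeta.1 * b.1.1 - zeta.2 * b.1.2), a.1.2 + (zeta.1 * b.1.2 + zeta.2 * b.1.1)),
   (a.2.1 + (zeta.1 * b.2.1 - zeta.2 * b.2.2), a.2.2 + (zeta.1 * b.2.2 + zeta.2 * b.2.1))).

(* plurisubharmonic (real-valued) function on the open set Om :
   upper semicontinuous, and sub-mean-value property on every closed
   complex disc {a + zeta b : |zeta| <= 1} contained in Om *)
Definition psh (Om : set C2) (u : C2 -> R) : Prop :=
  (forall z, Om z -> forall e : R, 0 < e -> \forall w \near z, u w < u z + e) /\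
  (forall a b : C2,
     (forall zeta : R * R, zeta.1 ^+ 2 + zeta.2 ^+ 2 <= 1 -> Om (cline a b zeta)) ->
     ((u a)%:E <= ((2 * pi)^-1)%:E *
        \int[lebesgue_measure]_(t in `[0%R, (2 * pi)%R]) (u (circ a b t))%:E)%E).

Definition bdist (Om : set C2) (z : C2) : R :=
  inf [set dist4 z w | w in ~` Om].

(* pseudoconvexity of an open set: -log dist(., boundary) is psh
   (with C^2 itself pseudoconvex) *)
Definition pseudoconvex (Om : set C2) : Prop :=
  open Om /\ (Om = setT \/ psh Om (fun z => - ln (bdist Om z))).

End Defs.

(* Write d for the distance to the complement of D.  The distance to the boundary of
   a semitube S_E at z is d_E at the base point (z1, Re z2), so, after an isometry
   putting a segment [x, y] of D on the Re z2-axis, plurisubharmonicity of -ln of the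
   boundary distance on the disc centred on the segment gives the sub-mean-value
   inequality -ln d(x_t) <= (2 pi)^-1 \int -ln d(x_(t + r cos th)) dth along the
   segment.  At the last point t where d restricted to [x, y] is minimal this is
   impossible unless t is an endpoint, because the integrand is strictly smaller for
   cos th > 0.  Hence d >= min (d x) (d y) on [x, y], so the points of D seen from x
   through segments in D form a set that is open and closed in D, hence all of D. *)

From HB Require Import structures.
From mathcomp Require Import all_boot all_order all_algebra.
From mathcomp Require Import all_classical all_reals all_analysis.
From mathcomp Require Import ring lra.
Set Implicit Arguments. Unset Strict Implicit. Unset Printing Implicit Defensive.
Import Order.TTheory GRing.Theory Num.Theory.
Import numFieldNormedType.Exports.
Local Open Scope classical_set_scope.
Local Open Scope ring_scope.

Section Euclid3.
Variable R : realType.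
Implicit Types (p q r x y z v : R3 R) (D : set (R3 R)).

Lemma sqrtr_le_of_le_sqr (a b : R) : 0 <= b -> a <= b ^+ 2 -> Num.sqrt a <= b.
Proof. by move=> b0 /ler_wsqrtr; rewrite sqrtr_sqr ger0_norm. Qed.

Lemma le_sqrtr_of_sqr_le (a b : R) : b ^+ 2 <= a -> b <= Num.sqrt a.
Proof. by move=> /ler_wsqrtr; rewrite sqrtr_sqr; apply: le_trans (ler_norm b). Qed.

Lemma dist3_ge0 p q : 0 <= dist3 p q.
Proof. exact: sqrtr_ge0. Qed.

Lemma dist3C p q : dist3 p q = dist3 q p.
Proof. by rewrite /dist3; congr Num.sqrt; ring. Qed.

Lemma dist3xx p : dist3 p p = 0.
Proof. by rewrite /dist3 !subrr expr0n /= !addr0 sqrtr0. Qed.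

Lemma dist3_triangle p q r : dist3 p r <= dist3 p q + dist3 q r.
Proof.
rewrite /dist3.
set a1 := p.1.1 - q.1.1; set a2 := p.1.2 - q.1.2; set a3 := p.2 - q.2.
set b1 := q.1.1 - r.1.1; set b2 := q.1.2 - r.1.2; set b3 := q.2 - r.2.
have -> : p.1.1 - r.1.1 = a1 + b1 by rewrite /a1 /b1; ring.
have -> : p.1.2 - r.1.2 = a2 + b2 by rewrite /a2 /b2; ring.
have -> : p.2 - r.2 = a3 + b3 by rewrite /a3 /b3; ring.
set A := a1 ^+ 2 + a2 ^+ 2 + a3 ^+ 2; set B := b1 ^+ 2 + b2 ^+ 2 + b3 ^+ 2.
have A0 : 0 <= A by rewrite /A !addr_ge0 // sqr_ge0.
have B0 : 0 <= B by rewrite /B !addr_ge0 // sqr_ge0.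
have cauchy_schwarz : a1 * b1 + a2 * b2 + a3 * b3 <= Num.sqrt A * Num.sqrt B.
  rewrite -sqrtrM //; apply: le_sqrtr_of_sqr_le.
  have -> : A * B = (a1 * b1 + a2 * b2 + a3 * b3) ^+ 2 + ((a1 * b2 - a2 * b1) ^+ 2
     + (a1 * b3 - a3 * b1) ^+ 2 + (a2 * b3 - a3 * b2) ^+ 2) by rewrite /A /B; ring.
  by rewrite lerDl !addr_ge0 // sqr_ge0.
apply: sqrtr_le_of_le_sqr; first by rewrite addr_ge0 // sqrtr_ge0.
rewrite [X in _ <= X]sqrrD !sqr_sqrtr //.
have -> : (a1 + b1) ^+ 2 + (a2 + b2) ^+ 2 + (a3 + b3) ^+ 2 =
  A + B + 2 * (a1 * b1 + a2 * b2 + a3 * b3) by rewrite /A /B; ring.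
rewrite -mulr_natl; lra.
Qed.

Lemma normB_coord_le_dist3 p q :
  [/\ `|p.1.1 - q.1.1| <= dist3 p q, `|p.1.2 - q.1.2| <= dist3 p q
    & `|p.2 - q.2| <= dist3 p q].
Proof.
have := sqr_ge0 (p.1.1 - q.1.1); have := sqr_ge0 (p.1.2 - q.1.2).
have := sqr_ge0 (p.2 - q.2).
by split; apply: le_sqrtr_of_sqr_le; rewrite real_normK ?num_real //; lra.
Qed.

Lemma dist3_le_sum_normB p q :
  dist3 p q <= `|p.1.1 - q.1.1| + `|p.1.2 - q.1.2| + `|p.2 - q.2|.
Proof.
apply: sqrtr_le_of_le_sqr; first by rewrite !addr_ge0.
rewrite -[(p.1.1 - q.1.1) ^+ 2]real_normK ?num_real //.
rewrite -[(p.1.2 - q.1.2) ^+ 2]real_normK ?num_real //.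
rewrite -[(p.2 - q.2) ^+ 2]real_normK ?num_real //.
have := normr_ge0 (p.1.1 - q.1.1); have := normr_ge0 (p.1.2 - q.1.2).
have := normr_ge0 (p.2 - q.2); nra.
Qed.

Lemma nbhs3P p (B : set (R3 R)) :
  nbhs p B <-> exists2 e : R, 0 < e & forall q, dist3 p q < e -> B q.
Proof.
split.
  move=> /nbhs_ballP [e e0 sB]; exists e => // q pq; apply: sB.
  have [h1 h2 h3] := normB_coord_le_dist3 p q.
  split; [split|]; rewrite /ball /= -?ball_normE /ball_ /=.
  - exact: le_lt_trans h1 pq.
  - exact: le_lt_trans h2 pq.
  - exact: le_lt_trans h3 pq.
move=> [e e0 sB]; apply/nbhs_ballP; exists (e / 3); first by rewrite /= divr_gt0.
move=> q [[]]; rewrite /ball /= -?ball_normE /ball_ /= => h1 h2 h3.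
apply: sB; have := dist3_le_sum_normB p q; lra.
Qed.

Definition bdist3 D p := inf [set dist3 p q | q in ~` D].

Lemma bdist3_le D p q : ~ D q -> bdist3 D p <= dist3 p q.
Proof.
move=> Dq; apply: ge_inf; last by exists q.
by exists 0 => _ [r _ <-]; exact: dist3_ge0.
Qed.

Lemma bdist3_setT D p : D = setT -> bdist3 D p = 0.
Proof. by move=> ->; rewrite /bdist3 setCT image_set0 inf0. Qed.

Lemma le_bdist3 D p e : ~` D !=set0 ->
  (forall q, ~ D q -> e <= dist3 p q) -> e <= bdist3 D p.
Proof.
move=> [q0 Dq0] h; apply: lb_le_inf; first by exists (dist3 p q0), q0.
by move=> _ [q Dq <-]; exact: h.
Qed.

Lemma lt_bdist3_mem D p q : dist3 p q < bdist3 D p -> D q.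
Proof. by move=> h; apply: contrapT => /(bdist3_le p); rewrite leNgt h. Qed.

Lemma bdist3_lipschitz D p q : bdist3 D p <= bdist3 D q + dist3 p q.
Proof.
have [->|DN] := eqVneq D setT; first by rewrite !bdist3_setT // add0r dist3_ge0.
rewrite -lerBlDr; apply: le_bdist3 => [|r Dr]; first exact/setTPn.
have := bdist3_le p Dr; have := dist3_triangle p q r; lra.
Qed.

Lemma bdist3_gt0 D p : open D -> D p -> ~` D !=set0 -> 0 < bdist3 D p.
Proof.
move=> oD Dp DN; have /nbhs3P [e e0 sD] : nbhs p D by exact: open_nbhs_nbhs.
apply: lt_le_trans e0 _; apply: le_bdist3 => // q Dq.
by rewrite leNgt; apply/negP => /sD.
Qed.

Definition seg x y (t : R) : R3 R :=
  (((1 - t) * x.1.1 + t * y.1.1, (1 - t) * x.1.2 + t * y.1.2),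
    (1 - t) * x.2 + t * y.2).

Lemma seg0 x y : seg x y 0 = x.
Proof. by case: x => [[? ?] ?]; rewrite /seg /=; congr ((_, _), _); ring. Qed.

Lemma seg1 x y : seg x y 1 = y.
Proof. by case: y => [[? ?] ?]; rewrite /seg /=; congr ((_, _), _); ring. Qed.

Lemma segxx x t : seg x x t = x.
Proof. by case: x => [[? ?] ?]; rewrite /seg /=; congr ((_, _), _); ring. Qed.

Lemma dist3_seg x y s t : dist3 (seg x y s) (seg x y t) = `|s - t| * dist3 x y.
Proof.
rewrite /dist3 /seg /= -sqrtr_sqr -sqrtrM ?sqr_ge0 //; congr Num.sqrt; ring.
Qed.

Lemma dist3_seg_le x y z t : 0 <= t <= 1 ->
  dist3 (seg x y t) (seg x z t) <= dist3 y z.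
Proof.
move=> /andP [t0 t1]; rewrite /dist3 /seg /=; apply: ler_wsqrtr.
set S := (y.1.1 - z.1.1) ^+ 2 + (y.1.2 - z.1.2) ^+ 2 + (y.2 - z.2) ^+ 2.
have -> : ((1 - t) * x.1.1 + t * y.1.1 - ((1 - t) * x.1.1 + t * z.1.1)) ^+ 2 +
  ((1 - t) * x.1.2 + t * y.1.2 - ((1 - t) * x.1.2 + t * z.1.2)) ^+ 2 +
  ((1 - t) * x.2 + t * y.2 - ((1 - t) * x.2 + t * z.2)) ^+ 2 = t ^+ 2 * S.
  by rewrite /S; ring.
have : 0 <= S by rewrite /S !addr_ge0 // sqr_ge0.
have : t ^+ 2 <= 1 by nra.
nra.
Qed.

Definition translate3 v z : R3 R := ((z.1.1 + v.1.1, z.1.2 + v.1.2), z.2 + v.2).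

Definition opp3 v : R3 R := ((- v.1.1, - v.1.2), - v.2).

Lemma translate3K v : cancel (translate3 v) (translate3 (opp3 v)).
Proof. by case=> [[? ?] ?]; rewrite /translate3 /=; congr ((_, _), _); ring. Qed.

Lemma translate3NK v : cancel (translate3 (opp3 v)) (translate3 v).
Proof. by case=> [[? ?] ?]; rewrite /translate3 /=; congr ((_, _), _); ring. Qed.

Lemma isometry3_translate3 v : isometry3 (translate3 v).
Proof. by move=> p q; rewrite /dist3 /=; congr Num.sqrt; ring. Qed.

Definition dot3 p q := p.1.1 * q.1.1 + p.1.2 * q.1.2 + p.2 * q.2.

Definition reflect3 u z : R3 R :=
  let k := 2 * dot3 z u / dot3 u u in
  ((z.1.1 - k * u.1.1, z.1.2 - k * u.1.2), z.2 - k * u.2).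

Section Reflection.
Variable u : R3 R.
Hypothesis u_neq0 : dot3 u u != 0.

Lemma reflect3K : involutive (reflect3 u).
Proof.
move: u u_neq0 => [[u1 u2] u3] /= n0 [[z1 z2] z3].
by rewrite /reflect3 /dot3 /=; congr ((_, _), _); field; exact: n0.
Qed.

Lemma isometry3_reflect3 : isometry3 (reflect3 u).
Proof.
move: u u_neq0 => [[u1 u2] u3] /= n0 [[p1 p2] p3] [[q1 q2] q3].
by rewrite /dist3 /reflect3 /dot3 /=; congr Num.sqrt; field; exact: n0.
Qed.

End Reflection.

Lemma isometry_seg_to_axis x y : exists A B : R3 R -> R3 R,
  [/\ isometry3 A, cancel A B, cancel B A &
      forall t, A (seg x y t) = ((0, 0), t * dist3 x y)].
Proof.
set v := translate3 (opp3 x) y; set L := dist3 x y.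
have vL : dot3 v v = L ^+ 2.
  rewrite /L /dist3 sqr_sqrtr; last by rewrite !addr_ge0 // sqr_ge0.
  by rewrite /v /dot3 /translate3 /opp3 /=; ring.
have seg_x t : translate3 (opp3 x) (seg x y t) = ((t * v.1.1, t * v.1.2), t * v.2).
  by rewrite /seg /v /translate3 /opp3 /=; congr ((_, _), _); ring.
clearbody v L.
have [vL3|vL3] := eqVneq v.2 L.
  have [v1 v2] : v.1.1 = 0 /\ v.1.2 = 0.
    move: vL; rewrite /dot3 vL3 => vL.
    by split; apply/eqP; rewrite -sqrf_eq0; apply/eqP; nra.
  exists (translate3 (opp3 x)), (translate3 x); split.
  - exact: isometry3_translate3.
  - exact: translate3NK.
  - exact: translate3K.
  - by move=> t; rewrite seg_x vL3 v1 v2 !mulr0.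
(* The reflection in the hyperplane orthogonal to [v - L e3] swaps [v] and [L e3]. *)
set u : R3 R := ((v.1.1, v.1.2), v.2 - L).
have u_neq0 : dot3 u u != 0.
  apply: contra_neq vL3 => /= uu0; apply/eqP; rewrite -subr_eq0 -sqrf_eq0; apply/eqP.
  by move: uu0; rewrite /dot3 /= -!expr2; have := sqr_ge0 v.1.1; have := sqr_ge0 v.1.2;
    have := sqr_ge0 (v.2 - L); lra.
exists (reflect3 u \o translate3 (opp3 x)), (translate3 x \o reflect3 u); split.
- by move=> p q; rewrite /= isometry3_reflect3 // isometry3_translate3.
- by move=> z /=; rewrite reflect3K // translate3NK.
- by move=> z /=; rewrite translate3K reflect3K.
- move=> t /=; rewrite seg_x /reflect3 /dot3 /u /=.
  have -> : 2 * (t * v.1.1 * v.1.1 + t * v.1.2 * v.1.2 + t * v.2 * (v.2 - L)) /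
      (v.1.1 * v.1.1 + v.1.2 * v.1.2 + (v.2 - L) * (v.2 - L)) = t.
    apply: (canLR (mulfK u_neq0)); rewrite /dot3 /=.
    apply/eqP; rewrite -subr_eq0; apply/eqP.
    by transitivity (t * (dot3 v v - L ^+ 2)); [rewrite /dot3; ring | rewrite vL subrr mulr0].
  by congr ((_, _), _); ring.
Qed.

End Euclid3.

Section Semitube.
Variable R : realType.
Implicit Types (p : R3 R) (E D : set (R3 R)).

Definition proj3 (z : C2 R) : R3 R := ((z.1.1, z.1.2), z.2.1).

Lemma inf_eq_of_coinitial (S1 S2 : set R) : has_lbound S1 -> S2 `<=` S1 ->
  (forall x, S1 x -> exists2 y, S2 y & y <= x) -> inf S1 = inf S2.
Proof.
move=> lb1 s21 h.
have [S2_0|/set0P[y0 Sy0]] := eqVneq S2 set0.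
  have -> : S1 = set0 by apply/seteqP; split => // x /h [y]; rewrite S2_0.
  by rewrite S2_0.
have lb2 : has_lbound S2 by case: lb1 => m m1; exists m => y /s21 /m1.
apply/le_anti/andP; split.
  by apply: lb_le_inf; [exists y0 | move=> y /s21; exact: ge_inf].
apply: lb_le_inf; first by exists y0; exact: s21.
by move=> x /h [y Sy /(le_trans _)]; apply; exact: ge_inf.
Qed.

Lemma bdist_semitube E z : bdist (semitube E) z = bdist3 E (proj3 z).
Proof.
rewrite /bdist /bdist3; apply: inf_eq_of_coinitial.
- by exists 0 => _ [w _ <-]; exact: sqrtr_ge0.
- move=> _ [q Eq <-]; exists (((q.1.1, q.1.2), (q.2, z.2.2))).
    by move: Eq; case: q => [[? ?] ?].
  by rewrite /dist4 /dist3 /proj3 /= subrr expr0n /= addr0.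
- move=> _ [w Ew <-]; exists (dist3 (proj3 z) (proj3 w)); first by exists (proj3 w).
  by rewrite /dist4 /dist3 /proj3 /=; apply: ler_wsqrtr; rewrite lerDl sqr_ge0.
Qed.

Lemma semitube_eqT E : semitube E = setT -> E = setT.
Proof.
move=> ET; apply/seteqP; split => // p _.
have : semitube E ((p.1.1, p.1.2), (p.2, 0)) by rewrite ET.
by case: p => [[? ?] ?].
Qed.

Lemma bdist3_image D (A B : R3 R -> R3 R) p : isometry3 A ->
  cancel A B -> cancel B A -> bdist3 (A @` D) (A p) = bdist3 D p.
Proof.
move=> isoA AK BK; rewrite /bdist3; congr inf; apply/seteqP; split.
- move=> _ [q ADq <-]; exists (B q); first by move=> DBq; apply: ADq; exists (B q).
  by rewrite -isoA BK.
- move=> _ [q Dq <-]; exists (A q); last by rewrite isoA.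
  by move=> [w Dw /(can_inj AK) wq]; apply: Dq; rewrite -wq.
Qed.

End Semitube.

Section CircleMean.
Variable R : realType.
Local Notation mu := (@lebesgue_measure R).

Lemma continuous_integrable_itv (F : R -> R) (a b : R) : continuous F ->
  mu.-integrable `[a, b] (EFin \o F).
Proof.
move=> cF; apply: continuous_compact_integrable; first exact: segment_compact.
exact: continuous_subspaceT.
Qed.

Lemma lebesgue_measure_itvcc (a b : R) : a <= b -> mu `[a, b] = (b - a)%:E.
Proof.
rewrite lebesgue_measure_itv /= lte_fin le_eqVlt => /predU1P[->|->//].
by rewrite ltxx subrr.
Qed.

Lemma integral_itv_ge_cst (G : R -> R) (e a c b : R) : continuous G -> 0 <= e ->
  a <= c <= b -> (forall t, a <= t <= b -> 0 <= G t) ->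
  (forall t, a <= t <= c -> e <= G t) ->
  ((e * (c - a))%:E <= \int[mu]_(t in `[a, b]) (G t)%:E)%E.
Proof.
move=> cG e0 /andP[ac cb] G0 eG.
have sub_ac : (`[a, c] : set R) `<=` `[a, b].
  by apply: subset_itvScc; rewrite bnd_simp.
have mG := measurable_int _ (continuous_integrable_itv a b cG).
apply: (@le_trans _ _ (\int[mu]_(t in `[a, c]) (G t)%:E)%E); last first.
  by apply: (ge0_subset_integral mu (measurable_itv _) (measurable_itv _) mG).
rewrite EFinM -(lebesgue_measure_itvcc ac) -integral_cst //.
by apply: ge0_le_integral => //=; exact: measurable_funS mG.
Qed.

Lemma integral_itv_lt (F : R -> R) (K a c b : R) : continuous F ->
  a < c <= b -> (forall t, a <= t <= b -> F t <= K) ->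
  (forall t, a <= t <= c -> F t < K) ->
  (\int[mu]_(t in `[a, b]) (F t)%:E < (K * (b - a))%:E)%E.
Proof.
move=> cF /andP[ac cb] FK FltK.
set G := fun t => K - F t.
have cG : continuous G by move=> t; apply: cvgB; [exact: cvg_cst | exact: cF].
have [s] := EVT_min (ltW ac) (continuous_subspaceT cG).
rewrite in_itv /= => sac smin.
have Gs_gt0 : 0 < G s by rewrite subr_gt0 FltK.
have lowG : ((G s * (c - a))%:E <= \int[mu]_(t in `[a, b]) (G t)%:E)%E.
  apply: integral_itv_ge_cst => //; [exact: ltW | by rewrite (ltW ac) |].
  by move=> t /FK; rewrite subr_ge0.
have ab : a <= b := le_trans (ltW ac) cb.
have iG := continuous_integrable_itv a b cG.
have iK := continuous_integrable_itv a b (@cst_continuous _ R K).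
have Ifin : (\int[mu]_(t in `[a, b]) (G t)%:E)%E \is a fin_num.
  exact: integrable_fin_num iG.
rewrite (@eq_integral _ _ _ mu _ (fun t => (K%:E - (G t)%:E)%E)); last first.
  by move=> t _; rewrite /G -EFinB opprB addrC subrK.
rewrite integralB_EFin // integral_cst //.
rewrite [X in (K%:E * X)%E](_ : _ = (b - a)%:E); last exact: lebesgue_measure_itvcc.
move: lowG; rewrite -(fineK Ifin) -EFinM -EFinB !lee_fin lte_fin.
have : 0 < G s * (c - a) by rewrite mulr_gt0 // subr_gt0.
lra.
Qed.

Lemma mean_circle_lt (F : R -> R) (K : R) : continuous F ->
  (forall t, F t <= K) -> (forall t : R, 0 <= t <= pi / 4 -> F t < K) ->
  (((2 * pi)^-1)%:E * \int[mu]_(t in `[0%R, (2 * pi)%R]) (F t)%:E < K%:E)%E.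
Proof.
move=> cF FK FltK; have pi_gt0 : 0 < pi :> R := pi_gt0 R.
rewrite lte_pdivrMl ?mulr_gt0 // -EFinM [_ * K]mulrC -[X in K * X]subr0.
apply: (integral_itv_lt (c := pi / 4)) => //.
by rewrite divr_gt0 //= ler_pdivrMr //; nra.
Qed.

End CircleMean.

Section RealLine.
Variable R : realType.

Lemma lipschitz_continuous (f : R -> R) (k : R) : 0 < k ->
  (forall a b, `|f a - f b| <= k * `|a - b|) -> continuous f.
Proof.
move=> k0 fk x; apply/cvgrPdist_lt => e e0; apply/nbhs_ballP.
exists (e / k); first by rewrite /= divr_gt0.
move=> s; rewrite /ball /= => xs; apply: le_lt_trans (fk x s) _.
by rewrite -ltr_pdivlMl // mulrC.
Qed.

Lemma exists_last_argmin (g : R -> R) (a b : R) : a <= b -> continuous g ->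
  exists t, [/\ a <= t <= b, forall s, a <= s <= b -> g t <= g s
              & forall s, t < s <= b -> g t < g s].
Proof.
move=> ab cg; have [t0] := EVT_min ab (continuous_subspaceT cg).
rewrite in_itv /= => t0ab t0min.
set M := `[a, b] `&` g @^-1` `]-oo, g t0].
have M0 : M !=set0 by exists t0; split; rewrite /= in_itv /= ?t0ab ?lexx.
have ubM : has_ubound M by exists b => s [/= /[!in_itv] /andP[]].
have [] := closedI (@itv_closed _ R a b)
  (preimage_closed (fun s _ => cg s) (@lray_closed _ R (g t0))) (closure_sup M0 ubM).
rewrite /= !in_itv /= => supMab gsup.
exists (sup M); split => // s.
  by move=> sab; apply: le_trans gsup _; apply: t0min; rewrite in_itv.
case/andP=> supMs sb; rewrite ltNge; apply/negP => gs.
suff : s <= sup M by rewrite leNgt supMs.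
apply: sup_upper_bound => //; split; rewrite /= in_itv /=.
  by rewrite sb (le_trans _ (ltW supMs)) //; case/andP: supMab.
exact: le_trans gs gsup.
Qed.

End RealLine.

Section PseudoconvexSemitubes.
Variable R : realType.
Variable D : set (R3 R).
Hypothesis D_open : open D.
Hypothesis D_neqT : ~` D !=set0.
Hypothesis semitube_pseudoconvex :
  forall A : R3 R -> R3 R, isometry3 A -> pseudoconvex (semitube (A @` D)).
Implicit Types x y z : R3 R.

Lemma continuous_bdist3_seg x y : continuous (fun s => bdist3 D (seg x y s)).
Proof.
apply: (@lipschitz_continuous _ _ (dist3 x y + 1)) => [|a b].
  by have := dist3_ge0 x y; lra.
have := bdist3_lipschitz D (seg x y a) (seg x y b).
have := bdist3_lipschitz D (seg x y b) (seg x y a).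
rewrite !dist3_seg distrC => ba ab.
have := mulr_ge0 (normr_ge0 (a - b)) (dist3_ge0 x y); have := normr_ge0 (a - b).
by rewrite ler_norml mulrDl mul1r (mulrC (dist3 x y)) => *; apply/andP; split; lra.
Qed.

Lemma neg_ln_bdist3_seg_submean x y (t r : R) : 0 <= r ->
  (forall s, t - r <= s <= t + r -> D (seg x y s)) ->
  ((- ln (bdist3 D (seg x y t)))%:E <= ((2 * pi)^-1)%:E *
     \int[lebesgue_measure]_(th in `[0%R, (2 * pi)%R])
       (- ln (bdist3 D (seg x y (t + r * cos th))))%:E)%E.
Proof.
move=> r0 Dseg; have [A [B [isoA AK BK Aseg]]] := isometry_seg_to_axis x y.
have [_ [/semitube_eqT ADT|[_ submean]]] := semitube_pseudoconvex isoA.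
  exfalso; case: D_neqT => q; apply; have : (A @` D) (A q) by rewrite ADT.
  by case=> w Dw /(can_inj AK) <-.
set L := dist3 x y; set a : C2 R := ((0, 0), (t * L, 0)).
set b : C2 R := ((0, 0), (r * L, 0)).
have bdist_A (z : C2 R) s : proj3 z = A (seg x y s) ->
    bdist (semitube (A @` D)) z = bdist3 D (seg x y s).
  by move=> zs; rewrite bdist_semitube zs (bdist3_image _ _ isoA AK BK).
have proj_circ th : proj3 (circ a b th) = A (seg x y (t + r * cos th)).
  by rewrite Aseg -/L /proj3 /circ /rotC /=; congr ((_, _), _); ring.
have := submean a b; rewrite (bdist_A a t) ?Aseg //.
under eq_integral => th _ do rewrite (bdist_A _ _ (proj_circ th)).
apply=> zeta zeta_le1; exists (seg x y (t + r * zeta.1)).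
  apply: Dseg; have : zeta.1 ^+ 2 <= 1 by have := sqr_ge0 zeta.2; lra.
  by move=> ?; apply/andP; split; nra.
by rewrite Aseg -/L /cline /=; congr ((_, _), _); ring.
Qed.

Lemma bdist3_seg_ge_min x y t : (forall s, 0 <= s <= 1 -> D (seg x y s)) ->
  0 <= t <= 1 -> Num.min (bdist3 D x) (bdist3 D y) <= bdist3 D (seg x y t).
Proof.
move=> Dseg t01; rewrite leNgt; apply/negP => gt_lt_min.
set g := fun s => bdist3 D (seg x y s).
have g_gt0 s : 0 <= s <= 1 -> 0 < g s.
  by move=> s01; apply: bdist3_gt0 => //; exact: Dseg.
have [t1 [t1_01 t1_min t1_last]] :=
  exists_last_argmin ler01 (@continuous_bdist3_seg x y).
have : g t1 < g 0 /\ g t1 < g 1.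
  by apply/andP; rewrite /g seg0 seg1 -lt_min; exact: le_lt_trans (t1_min _ t01) gt_lt_min.
case=> g0 g1; set r := Num.min t1 (1 - t1).
have t1_neq0 : 0 != t1 by apply: contraTneq g0 => <-; rewrite ltxx.
have t1_neq1 : t1 != 1 by apply: contraTneq g1 => ->; rewrite ltxx.
have r_gt0 : 0 < r.
  by rewrite lt_min subr_gt0 !lt_neqAle t1_neq0 t1_neq1.
have r_le : r <= t1 /\ r <= 1 - t1 by split; rewrite ge_min lexx ?orbT.
have near01 s : -1 <= s <= 1 -> 0 <= t1 + r * s <= 1.
  by case: r_le => ? ? /andP[? ?]; apply/andP; split; nra.
have cos01 th : 0 <= t1 + r * cos th <= 1 by apply: near01; rewrite cos_geN1 cos_le1.
have Dnear s : t1 - r <= s <= t1 + r -> D (seg x y s).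
  case: r_le => ? ? /andP[? ?]; apply: Dseg; apply/andP; split; lra.
have := neg_ln_bdist3_seg_submean (ltW r_gt0) Dnear.
rewrite leNgt => /negP; apply; apply: mean_circle_lt => [th|th|th].
- have cos_cont : {for th, continuous (fun th => t1 + r * cos th)}.
    by apply: cvgD; [exact: cvg_cst | apply: cvgM; [exact: cvg_cst | exact: continuous_cos]].
  have g_cont := continuous_comp cos_cont (@continuous_bdist3_seg x y _).
  exact: cvgN (continuous_comp g_cont (continuous_ln (g_gt0 _ (cos01 th)))).
- by rewrite lerN2 ler_ln ?posrE ?g_gt0 // t1_min.
- move=> /andP[th0 th1]; have pi_gt0 : 0 < pi :> R := pi_gt0 R.
  rewrite ltrN2 ltr_ln ?posrE ?g_gt0 //; apply: t1_last.
  have : 0 < cos th by apply: cos_gt0_pihalf; apply/andP; split; lra.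
  by case/andP: (cos01 th) => _ -> cos_gt0; rewrite ltrDl mulr_gt0.
Qed.

Definition star x := [set y | D y /\ forall t, 0 <= t <= 1 -> D (seg x y t)].

Lemma star_refl x : D x -> star x x.
Proof. by move=> Dx; split=> // t _; rewrite segxx. Qed.

Lemma star_ball x y z : star x y ->
  dist3 y z < Num.min (bdist3 D x) (bdist3 D y) -> star x z.
Proof.
move=> [Dy Dxy] yz; have Dxz t : 0 <= t <= 1 -> D (seg x z t).
  move=> t01; apply: (@lt_bdist3_mem _ D (seg x y t)).
  by have := bdist3_seg_ge_min Dxy t01; have := dist3_seg_le x y z t01; lra.
by split=> //; rewrite -(seg1 x z); apply: Dxz; rewrite ler01 lexx.
Qed.

Lemma star_open_in x : D x -> exists2 A, open A & star x = D `&` A.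
Proof.
move=> Dx; set m := fun y => Num.min (bdist3 D x) (bdist3 D y).
exists [set z | exists2 y, star x y & dist3 y z < m y].
  rewrite openE => z [y xy yz]; apply/nbhs3P.
  exists (m y - dist3 y z); first by rewrite subr_gt0.
  by move=> w zw; exists y => //; have := dist3_triangle y z w; lra.
apply/seteqP; split=> [y xy|z [_ [y xy /(star_ball xy)]] //].
split; first by case: xy.
by exists y; rewrite // dist3xx lt_min !bdist3_gt0 //; case: xy.
Qed.

Lemma star_closed_in x : D x -> exists2 B, closed B & star x = D `&` B.
Proof.
move=> Dx; exists (closure (star x)); first exact: closed_closure.
apply/seteqP; split=> [y xy|y [Dy cl_y]].
  by split; [case: xy | exact: subset_closure].
set m := Num.min (bdist3 D x) (bdist3 D y).
have m_gt0 : 0 < m by rewrite lt_min !bdist3_gt0.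
have [m_x m_y] : m <= bdist3 D x /\ m <= bdist3 D y by split; rewrite ge_min lexx ?orbT.
have /cl_y [y' [xy' yy']] : nbhs y [set w | dist3 y w < m / 2].
  by apply/nbhs3P; exists (m / 2) => //; rewrite divr_gt0.
apply: (star_ball xy'); rewrite dist3C.
have : m / 2 < Num.min (bdist3 D x) (bdist3 D y').
  by have := bdist3_lipschitz D y y'; rewrite lt_min; move: yy' => /= yy' ?; apply/andP; split; lra.
by move: yy' => /=; lra.
Qed.

End PseudoconvexSemitubes.

Theorem theorem1p1 (R : realType) (D : set (R3 R)) :
  domain3 D ->
  (forall A : R3 R -> R3 R, isometry3 A -> pseudoconvex (semitube (A @` D))) ->
  convex3 D.
Proof.
move=> [_ [oD cD]] pscvx x y Dx Dy.
have [-> t _ //|/setTPn DN] := eqVneq D setT.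
suff : star D x y by case.
have [Aopen oA starA] := star_open_in oD DN pscvx Dx.
have [Bclosed cB starB] := star_closed_in oD DN pscvx Dx.
rewrite (cD _ _ (ex_intro2 _ _ _ oA starA) (ex_intro2 _ _ _ cB starB)) //.
by exists x; exact: star_refl.
Qed.
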